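(* Let $\mathfrak{u}=(U_i,u_i,u^i)_{i\in\mathbb Z}$ be a representation of $\mathcal Z$ and $\mathfrak{u}^\vee$ its dual. Then $\mathfrak{u}$ is pure (resp. nontrivial, resp. a special chain) if and only if $\mathfrak{u}^\vee$ is pure (resp. nontrivial, resp. a special chain). Moreover, $\mathfrak{u}$ is a linked chain if and only if $\mathfrak{u}^\vee$ is a colinked chain. Finally, for a subset $H\subseteq\mathbb Z$, $\mathfrak{u}$ has support $H$ if and only if $\mathfrak{u}^\vee$ has cosupport $H$.
   Context: Let $k$ be a field. $\mathcal Z$ is the quiver with vertex set $\mathbb Z$ and, for each $i\in\mathbb Z$, arrows $\alpha^i\colon i\to i+1$ and $\alpha_i\colon i+1\to i$. A representation $\mathfrak{u}=(U_i,u_i,u^i)_{i\in\mathbb Z}$ consists of finite-dimensional $k$-vector spaces $U_i$ and linear maps $u^i\colon U_i\to U_{i+1}$, $u_i\colon U_{i+1}\to U_i$. Its dual is $\mathfrak{u}^\vee=(U_i^\vee,(u^i)^\vee,(u_i)^\vee)_{i\in\mathbb Z}$, i.e. the map associated to $\alpha_i$ is $(u^i)^\vee$ and to $\alpha^i$ is $(u_i)^\vee$. Compositions: $u^i_i=\mathrm{Id}$, $u^i_j=u^{j-1}\circ\cdots\circ u^i$ for $j>i$, $u^i_j=u_j\circ\cdots\circ u_{i-1}$ for $j<i$. The representation is pure if all $U_i$ have the same dimension, nontrivial if $U_i\neq0$ for all $i$. A special chain: $u_i\circ u^i=0$ and $u^i\circ u_i=0$ for all $i$. A linked chain: special chain with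 $\ker(u_{i-1})\cap\ker(u^i)=0$ for all $i$. A colinked chain: special chain with $\mathrm{Im}(u_i)+\mathrm{Im}(u^{i-1})=U_i$ for all $i$. $H\subseteq\mathbb Z$ is a support if for each $i\in\mathbb Z$ there is $j\in H$ with $u^j_i$ surjective, and a cosupport if for each $i$ there is $j\in H$ with $u^i_j$ injective. *)

From HB Require Import structures.
From mathcomp Require Import all_boot all_order all_algebra.
Set Implicit Arguments. Unset Strict Implicit. Unset Printing Implicit Defensive.
Import Order.TTheory GRing.Theory Num.Theory.
Local Open Scope ring_scope.

(* A representation of the quiver Z over a field k: finite-dimensional
   k-vector spaces U i (i : int) with maps
   up i = u^i : U i -> U (i+1) and dn i = u_i : U (i+1) -> U i. *)
Record zrep (k : fieldType) := ZRep {
  U : int -> vectType k;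
  up : forall i : int, 'Hom(U i, U (i + 1));
  dn : forall i : int, 'Hom(U (i + 1), U i) }.

Section Defs.
Variable k : fieldType.

Definition dualV (V : vectType k) : vectType k := 'Hom(V, k^o).

Definition dualmap (V W : vectType k) (f : 'Hom(V, W)) : 'Hom(dualV W, dualV V) :=
  linfun (fun phi : 'Hom(W, k^o) => (phi \o f)%VF).

Definition dual_rep (r : zrep k) : zrep k :=
  @ZRep k (fun i => dualV (U r i))
       (fun i => dualmap (dn r i))
       (fun i => dualmap (up r i)).

Variable r : zrep k.

Definition castU (i j : int) (e : i = j) : 'Hom(U r i, U r j) :=
  match e in _ = j return 'Hom(U r i, U r j) with erefl => \1%VF end.

Lemma upc_eq (i : int) (n : nat) : i + n%:Z + 1 = i + n.+1%:Z.
Proof. by rewrite -addn1 PoszD addrA. Qed.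

Lemma dnc_eq (i : int) (n : nat) : i - n%:Z = i - n.+1%:Z + 1.
Proof. by rewrite -addn1 PoszD opprD addrA subrK. Qed.

Lemma zero_eq (i : int) : i = i + 0%:Z.
Proof. by rewrite addr0. Qed.

Fixpoint upc (i : int) (n : nat) : 'Hom(U r i, U r (i + n%:Z)) :=
  match n return 'Hom(U r i, U r (i + n%:Z)) with
  | 0 => castU (zero_eq i)
  | n'.+1 => (castU (upc_eq i n') \o up r (i + n'%:Z) \o upc i n')%VF
  end.

Lemma zero_eq' (i : int) : i = i - 0%:Z.
Proof. by rewrite subr0. Qed.

Fixpoint dnc (i : int) (n : nat) : 'Hom(U r i, U r (i - n%:Z)) :=
  match n return 'Hom(U r i, U r (i - n%:Z)) with
  | 0 => castU (zero_eq' i)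
  | n'.+1 => (dn r (i - n'.+1%:Z) \o castU (dnc_eq i n') \o dnc i n')%VF
  end.

Lemma comp_pos (i j : int) (n : nat) : j - i = Posz n -> i + n%:Z = j.
Proof. by move=> <-; rewrite addrC subrK. Qed.

Lemma comp_neg (i j : int) (n : nat) : j - i = Negz n -> i - n.+1%:Z = j.
Proof. by rewrite NegzE => <-; rewrite addrC subrK. Qed.

Definition ucomp (i j : int) : 'Hom(U r i, U r j) :=
  match j - i as d return j - i = d -> 'Hom(U r i, U r j) with
  | Posz n => fun e => (castU (comp_pos e) \o upc i n)%VF
  | Negz n => fun e => (castU (comp_neg e) \o dnc i n.+1)%VF
  end erefl.

Definition pure : Prop := forall i j : int, \dim {: U r i} = \dim {: U r j}.

Definition nontrivial : Prop := forall i : int, {: U r i}%VS != 0%VS.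

Definition special_chain : Prop :=
  forall i : int, (dn r i \o up r i = 0)%VF /\ (up r i \o dn r i = 0)%VF.

(* ker(u_{i-1}) ∩ ker(u^i) = 0, written with the index shifted (i := i+1) *)
Definition linked_chain : Prop :=
  special_chain /\ forall i : int, (lker (dn r i) :&: lker (up r (i + 1)))%VS = 0%VS.

(* Im(u_i) + Im(u^{i-1}) = U_i, written with the index shifted (i := i+1) *)
Definition colinked_chain : Prop :=
  special_chain /\ forall i : int, (limg (dn r (i + 1)) + limg (up r i))%VS = fullv.

Definition is_support (H : int -> Prop) : Prop :=
  forall i : int, exists j : int, H j /\ limg (ucomp j i) = fullv.

Definition is_cosupport (H : int -> Prop) : Prop :=
  forall i : int, exists j : int, H j /\ lker (ucomp i j) = 0%VS.

End Defs.

From HB Require Import structures.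
From mathcomp Require Import all_boot all_order all_algebra.
From mathcomp Require Import zify.
Set Implicit Arguments. Unset Strict Implicit. Unset Printing Implicit Defensive.
Import Order.TTheory GRing.Theory Num.Theory.
Local Open Scope ring_scope.

(* Everything follows from finite-dimensional linear duality: dim V^vee = dim V,
   transposition is a contravariant functor, f is onto iff f^vee is one-to-one,
   and ker f ∩ ker g = 0 iff Im g^vee + Im f^vee is everything.  The compositions
   of the dual representation are the transposes of those of u, taken in the
   opposite direction, so support turns into cosupport. *)

Section DualSpace.
Variable k : fieldType.
Implicit Types V W X : vectType k.

Lemma dimv_dual V : \dim {: dualV V} = \dim {: V}.
Proof. by rewrite !dimvf [LHS]muln1. Qed.

(* Gives [fun g => g \o f] the canonical linear structure that [lfunE] needs. *)
Definition precomp V W X (f : 'Hom(V, W)) (g : 'Hom(W, X)) : 'Hom(V, X) :=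
  (g \o f)%VF.

Fact precomp_is_linear V W X (f : 'Hom(V, W)) : linear (@precomp V W X f).
Proof. by move=> a g h; rewrite /precomp comp_lfunDl comp_lfunZl. Qed.

HB.instance Definition _ V W X (f : 'Hom(V, W)) :=
  GRing.isSemilinear.Build k _ _ _ (@precomp V W X f)
    (GRing.semilinear_linear (precomp_is_linear f)).

Lemma dualmapE V W (f : 'Hom(V, W)) (phi : 'Hom(W, k^o)) :
  dualmap f phi = (phi \o f)%VF.
Proof. exact: (lfunE (precomp f)). Qed.

Lemma dualmap_comp V W X (f : 'Hom(W, X)) (g : 'Hom(V, W)) :
  dualmap (f \o g)%VF = (dualmap g \o dualmap f)%VF.
Proof. by apply/lfunP => phi; rewrite comp_lfunE !dualmapE comp_lfunA. Qed.

Lemma dualmap1 V : dualmap (\1%VF : 'End(V)) = \1%VF.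
Proof. by apply/lfunP => phi; rewrite dualmapE id_lfunE comp_lfun1r. Qed.

Lemma dualmap0 V W : dualmap (0 : 'Hom(V, W)) = 0.
Proof. by apply/lfunP => phi; rewrite dualmapE zero_lfunE comp_lfun0r. Qed.

Lemma dual_separates V (S : {vspace V}) (v : V) : v \notin S ->
  exists2 phi : 'Hom(V, k^o), (S <= lker phi)%VS & phi v != 0.
Proof.
move=> vNS; set w := v - projv S v.
have w_neq0 : w != 0.
  by apply: contra vNS; rewrite subr_eq0 => /eqP ->; apply: memv_proj.
have [j coord_j_neq0] : exists j, coord (vbasis fullv) j w != 0.
  apply/existsP; apply: contraR w_neq0; rewrite negb_exists => /forallP coord0.
  rewrite (coord_vbasis (memvf w)) big1 // => j _.
  by move/negPn/eqP: (coord0 j) => ->; rewrite scale0r.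
exists (linfun (coord (vbasis fullv) j : V -> k^o) \o (\1 - projv S))%VF.
  apply/subvP => s Ss; rewrite memv_ker comp_lfunE add_lfunE opp_lfunE id_lfunE.
  by rewrite projv_id // subrr linear0.
by rewrite comp_lfunE add_lfunE opp_lfunE id_lfunE lfunE.
Qed.

Lemma dual_separates_points V (v : V) :
  (forall phi : 'Hom(V, k^o), phi v = 0) -> v = 0.
Proof.
move=> phi_v0; apply/eqP; apply: contraT; rewrite -memv0.
by case/dual_separates => phi _; rewrite phi_v0 eqxx.
Qed.

Lemma dualmap_eq0 V W (f : 'Hom(V, W)) : (dualmap f == 0) = (f == 0).
Proof.
apply/eqP/eqP => [f_v0|->]; last exact: dualmap0.
apply/lfunP => v; rewrite zero_lfunE; apply: dual_separates_points => phi.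
by rewrite -comp_lfunE -dualmapE f_v0 zero_lfunE zero_lfunE.
Qed.

Lemma bidual_eval V (Psi : 'Hom(dualV V, k^o)) :
  exists v : V, forall phi : 'Hom(V, k^o), Psi phi = phi v.
Proof.
pose e := vbasis (fullv : {vspace V}).
pose e_dual j := linfun (coord e j : V -> k^o).
exists (\sum_(j < \dim {: V}) Psi (e_dual j) *: e`_j) => phi.
have phi_expand : phi = \sum_(j < \dim {: V}) phi e`_j *: e_dual j.
  apply/lfunP => x; rewrite sum_lfunE {1}(coord_vbasis (memvf x)) linear_sum.
  by apply: eq_bigr => j _; rewrite linearZ scale_lfunE lfunE; apply: mulrC.
rewrite {1}phi_expand !linear_sum; apply: eq_bigr => j _.
by rewrite !linearZ /=; apply: mulrC.
Qed.

Lemma lker_dualmap_eq0 V W (f : 'Hom(V, W)) :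
  (lker (dualmap f) == 0%VS) = (limg f == fullv).
Proof.
apply/eqP/eqP => [ker0 | img_full].
  apply/eqP; rewrite eqEsubv subvf /=; apply/subvP => w _; apply: contraT.
  case/dual_separates => phi img_phi0 phi_w; have: phi \in lker (dualmap f).
    rewrite memv_ker dualmapE; apply/eqP/lfunP => v; rewrite comp_lfunE zero_lfunE.
    by apply/eqP; rewrite -memv_ker (subvP img_phi0) ?memv_img ?memvf.
  by rewrite ker0 memv0 => /eqP phi0; rewrite phi0 zero_lfunE eqxx in phi_w.
apply/eqP; rewrite -subv0; apply/subvP => phi; rewrite memv_ker memv0 dualmapE.
move=> /eqP phi_f0; apply/eqP/lfunP => w; rewrite zero_lfunE.
have /memv_imgP[v _ ->] : w \in limg f by rewrite img_full memvf.
by rewrite -comp_lfunE phi_f0 zero_lfunE.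
Qed.

Lemma addv_limg_dualmap_full V W1 W2 (f : 'Hom(V, W1)) (g : 'Hom(V, W2)) :
  ((limg (dualmap g) + limg (dualmap f))%VS == fullv) =
  ((lker f :&: lker g)%VS == 0%VS).
Proof.
apply/eqP/eqP => [sum_full | cap0].
  apply/eqP; rewrite -subv0; apply/subvP => v.
  rewrite memv_cap !memv_ker memv0 => /andP[/eqP fv0 /eqP gv0].
  apply/eqP; apply: dual_separates_points => phi.
  have : phi \in (limg (dualmap g) + limg (dualmap f))%VS by rewrite sum_full memvf.
  case/memv_addP => _ /memv_imgP[a _ ->] [_ /memv_imgP[b _ ->] ->].
  by rewrite add_lfunE !dualmapE !comp_lfunE gv0 fv0 !linear0 addr0.
apply/eqP; rewrite eqEsubv subvf /=; apply/subvP => phi _; apply: contraT.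
case/dual_separates => Psi sum_Psi0 Psi_phi; have [v Psi_ev] := bidual_eval Psi.
have dual_vanish W (h : 'Hom(V, W)) :
    (limg (dualmap h) <= lker Psi)%VS -> h v = 0.
  move=> img_h; apply: dual_separates_points => a.
  rewrite -comp_lfunE -dualmapE -Psi_ev; apply/eqP; rewrite -memv_ker.
  by rewrite (subvP img_h) ?memv_img ?memvf.
have fv0 : f v = 0 by apply: dual_vanish; apply: subv_trans sum_Psi0; apply: addvSr.
have gv0 : g v = 0 by apply: dual_vanish; apply: subv_trans sum_Psi0; apply: addvSl.
have : v \in (lker f :&: lker g)%VS by rewrite memv_cap !memv_ker fv0 gv0 !eqxx.
by rewrite cap0 memv0 => /eqP v0; rewrite Psi_ev v0 linear0 eqxx in Psi_phi.
Qed.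

End DualSpace.

Lemma int_ind_ge (P : int -> Prop) (a : int) :
  P a -> (forall b, a <= b -> P b -> P (b + 1)) -> forall b, a <= b -> P b.
Proof.
move=> Pa IH b le_ab; case E: (b - a) => [n|n]; last by move: le_ab E; lia.
rewrite -(comp_pos E); elim: n {E} => [|n IHn]; first by rewrite addr0.
by rewrite -upc_eq; apply: IH => //; lia.
Qed.

Lemma int_ind_le (P : int -> Prop) (a : int) :
  P a -> (forall b, b + 1 <= a -> P (b + 1) -> P b) -> forall b, b <= a -> P b.
Proof.
move=> Pa IH b le_ba; case E: (a - b) => [n|n]; last by move: le_ba E; lia.
have -> : b = a - n%:Z by move: E; lia.
elim: n {E} => [|n IHn]; first by rewrite subr0.
by apply: IH; [lia | rewrite -dnc_eq].
Qed.

Section Compositions.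
Variables (k : fieldType) (r : zrep k).

Lemma castU_irr (i j : int) (e e' : i = j) : castU r e = castU r e'.
Proof. by rewrite (eq_irrelevance e e'). Qed.

Lemma castU_id (i : int) (e : i = i) : castU r e = \1%VF.
Proof. exact: (castU_irr e erefl). Qed.

Lemma castU_trans (i j l : int) (e1 : i = j) (e2 : j = l) :
  (castU r e2 \o castU r e1)%VF = castU r (etrans e1 e2).
Proof. by case: j / e1 e2 => e2; case: l / e2; rewrite !castU_id comp_lfun1l. Qed.

Lemma castU_up (a b : int) (e : a = b) (e' : a + 1 = b + 1) :
  (castU r e' \o up r a)%VF = (up r b \o castU r e)%VF.
Proof. by case: b / e e' => e'; rewrite !castU_id comp_lfun1l comp_lfun1r. Qed.

Lemma castU_dn (a b : int) (e : a = b) (e' : a + 1 = b + 1) :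
  (castU r e \o dn r a)%VF = (dn r b \o castU r e')%VF.
Proof. by case: b / e e' => e'; rewrite !castU_id comp_lfun1l comp_lfun1r. Qed.

Lemma ucomp_unfold (i j d : int) (e : j - i = d) : ucomp r i j =
  (match d as d0 return j - i = d0 -> 'Hom(U r i, U r j) with
   | Posz n => fun e => (castU r (comp_pos e) \o upc r i n)%VF
   | Negz n => fun e => (castU r (comp_neg e) \o dnc r i n.+1)%VF end) e.
Proof. by case: d / e. Qed.

Lemma ucomp_upc (i j : int) (n : nat) (e : i + n%:Z = j) :
  ucomp r i j = (castU r e \o upc r i n)%VF.
Proof.
have e1 : j - i = Posz n by rewrite -e addrAC subrr add0r.
by rewrite (ucomp_unfold e1) (castU_irr (comp_pos e1) e).
Qed.

Lemma ucomp_dnc (i j : int) (n : nat) (e : i - n%:Z = j) :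
  ucomp r i j = (castU r e \o dnc r i n)%VF.
Proof.
case: n e => [|n] e.
  have e1 : j - i = Posz 0 by rewrite -e subr0 subrr.
  by rewrite (ucomp_unfold e1) /= !castU_trans; apply: castU_irr.
have e1 : j - i = Negz n by rewrite -e NegzE addrAC subrr add0r.
by rewrite (ucomp_unfold e1) (castU_irr (comp_neg e1) e).
Qed.

Lemma ucomp_id (i : int) : ucomp r i i = \1%VF.
Proof. by rewrite (ucomp_upc (esym (zero_eq i))) /= castU_trans castU_id. Qed.

Lemma ucomp_upr (i j : int) : i <= j ->
  ucomp r i (j + 1) = (up r j \o ucomp r i j)%VF.
Proof.
move=> le_ij; case E: (j - i) => [n|n]; last by move: le_ij; rewrite -subr_ge0 E.
have e := comp_pos E; have e1 : i + n.+1%:Z = j + 1 by rewrite -upc_eq e.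
rewrite (ucomp_upc e) (ucomp_upc e1) /= !comp_lfunA castU_trans.
by rewrite (castU_up e).
Qed.

Lemma ucomp_dnr (i j : int) : j + 1 <= i ->
  ucomp r i j = (dn r j \o ucomp r i (j + 1))%VF.
Proof.
move=> lt_ji; case E: (j - i) => [n|n]; first by move: lt_ji E; lia.
have e := comp_neg E; have e1 : i - n%:Z = j + 1 by rewrite dnc_eq e.
have e' : i - n.+1%:Z + 1 = j + 1 by rewrite e.
rewrite (ucomp_dnc e) (ucomp_dnc e1) /= !comp_lfunA (castU_dn e e').
by rewrite -(comp_lfunA (dn r j)) castU_trans (castU_irr _ e1).
Qed.

Lemma ucomp_upl (j i : int) : j + 1 <= i ->
  ucomp r j i = (ucomp r (j + 1) i \o up r j)%VF.
Proof.
move: i; apply: int_ind_ge.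
  by rewrite ucomp_upr // !ucomp_id comp_lfun1r comp_lfun1l.
move=> b le_b IH; rewrite ucomp_upr; last lia.
by rewrite IH ucomp_upr // comp_lfunA.
Qed.

Lemma ucomp_dnl (j i : int) : j <= i ->
  ucomp r (i + 1) j = (ucomp r i j \o dn r i)%VF.
Proof.
move: j; apply: int_ind_le.
  by rewrite ucomp_dnr // !ucomp_id comp_lfun1r comp_lfun1l.
move=> b lt_b IH; rewrite ucomp_dnr; last lia.
by rewrite IH (ucomp_dnr lt_b) comp_lfunA.
Qed.

End Compositions.

Lemma ucomp_dual (k : fieldType) (u : zrep k) (i j : int) :
  ucomp (dual_rep u) i j = dualmap (ucomp u j i).
Proof.
have [le_ij | /ltW le_ji] := lerP i j.
  move: j le_ij; apply: int_ind_ge; first by rewrite !ucomp_id dualmap1.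
  by move=> b le_ib IH; rewrite ucomp_upr // IH ucomp_dnl // dualmap_comp.
move: j le_ji; apply: int_ind_le; first by rewrite !ucomp_id dualmap1.
by move=> b lt_bi IH; rewrite ucomp_dnr // IH (ucomp_upl u lt_bi) dualmap_comp.
Qed.

Section DualRepresentation.
Variables (k : fieldType) (u : zrep k).

Lemma pure_dual : pure u <-> pure (dual_rep u).
Proof. by split=> pure_u i j; have := pure_u i j; rewrite /= !dimv_dual. Qed.

Lemma nontrivial_dual : nontrivial u <-> nontrivial (dual_rep u).
Proof.
by split=> ntriv_u i; have := ntriv_u i; rewrite /= -!dimv_eq0 dimv_dual.
Qed.

Lemma special_chain_dual : special_chain u <-> special_chain (dual_rep u).
Proof.
rewrite /special_chain /=; split=> chain i; have [dn_up up_dn] := chain i.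
  by split; rewrite -dualmap_comp ?dn_up ?up_dn dualmap0.
by split; apply/eqP; rewrite -dualmap_eq0 dualmap_comp ?dn_up ?up_dn.
Qed.

Lemma linked_colinked_dual : linked_chain u <-> colinked_chain (dual_rep u).
Proof.
rewrite /linked_chain /colinked_chain special_chain_dual /=.
by split=> -[chain link]; split=> // i; apply/eqP; have /eqP := link i;
  rewrite addv_limg_dualmap_full.
Qed.

Lemma support_cosupport_dual (H : int -> Prop) :
  is_support u H <-> is_cosupport (dual_rep u) H.
Proof.
split=> supp i; have [j [Hj comp_j]] := supp i; exists j; split=> //.
  by rewrite ucomp_dual; apply/eqP; rewrite lker_dualmap_eq0; apply/eqP.
by apply/eqP; rewrite -lker_dualmap_eq0 -ucomp_dual; apply/eqP.
Qed.

End DualRepresentation.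

Theorem proposition2p5 (k : fieldType) (u : zrep k) :
  (pure u <-> pure (dual_rep u)) /\
  (nontrivial u <-> nontrivial (dual_rep u)) /\
  (special_chain u <-> special_chain (dual_rep u)) /\
  (linked_chain u <-> colinked_chain (dual_rep u)) /\
  (forall H : int -> Prop, is_support u H <-> is_cosupport (dual_rep u) H).
Proof.
split; first exact: pure_dual.
split; first exact: nontrivial_dual.
split; first exact: special_chain_dual.
split; first exact: linked_colinked_dual.
exact: support_cosupport_dual.
Qed.
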